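(* There exists a $5\times 5$ pandiagonal magic square $A$ whose twenty-five entries are pairwise distinct strings of length $4$ over $\{0,1,2\}$ (read as decimal numbers, leading zeros allowed), with magic sum $S1=5555$, such that the rotated array $R(A)$ is also a magic square with magic sum $5555$.
   Context: A magic square of order $n$ is an $n\times n$ array of numbers in which the sums of the entries of each row, of each column and of each of the two principal diagonals all equal a common value $S1$ (the magic sum). It is pandiagonal if moreover all $2n$ broken diagonals (the sets $\{(i,j): j-i\equiv c \pmod n\}$ and $\{(i,j): i+j\equiv c\pmod n\}$) have sum $S1$. For an $n\times n$ array $A$ whose entries are digit strings $d_1d_2\cdots d_k$ over $\{0,1,2\}$, the rotated array $R(A)$ is defined by $R(A)_{i,j}=\overline{A_{n+1-i,\,n+1-j}}$, where $\overline{d_1\cdots d_k}=d_k\cdots d_1$. Strings are interpreted as decimal integers. *)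

From mathcomp Require Import all_boot.
Set Implicit Arguments. Unset Strict Implicit. Unset Printing Implicit Defensive.

(* A digit string d_1 d_2 ... d_k is a list of digits (most significant first). *)
Definition digstr := seq nat.

Definition decval (s : digstr) : nat := foldl (fun acc d => acc * 10 + d) 0 s.

Definition ternary_string (k : nat) (s : digstr) : bool :=
  (size s == k) && all (fun d => d < 3) s.

Definition array (n : nat) := 'I_n -> 'I_n -> nat.

Definition row_sum n (M : array n) (i : 'I_n) := \sum_(j < n) M i j.
Definition col_sum n (M : array n) (j : 'I_n) := \sum_(i < n) M i j.
Definition diag_sum n (M : array n) := \sum_(i < n) M i i.
Definition antidiag_sum n (M : array n) := \sum_(i < n) M i (rev_ord i).

Definition is_magic n (M : array n) (S1 : nat) : Prop :=
  (forall i, row_sum M i = S1) /\ (forall j, col_sum M j = S1) /\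
  diag_sum M = S1 /\ antidiag_sum M = S1.

Definition broken_diag_sum n (M : array n) (c : nat) :=
  \sum_(i < n) \sum_(j < n | (j + n - i) %% n == c %% n) M i j.
Definition broken_antidiag_sum n (M : array n) (c : nat) :=
  \sum_(i < n) \sum_(j < n | (i + j) %% n == c %% n) M i j.

Definition is_pandiagonal_magic n (M : array n) (S1 : nat) : Prop :=
  is_magic M S1 /\
  (forall c, c < n -> broken_diag_sum M c = S1) /\
  (forall c, c < n -> broken_antidiag_sum M c = S1).

Definition val_array n (A : 'I_n -> 'I_n -> digstr) : array n :=
  fun i j => decval (A i j).

(* rotated array: R(A)_{i,j} = reverse of A_{n+1-i, n+1-j} (1-based) *)
Definition rot_array n (A : 'I_n -> 'I_n -> digstr) : 'I_n -> 'I_n -> digstr :=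
  fun i j => rev (A (rev_ord i) (rev_ord j)).

From mathcomp Require Import all_boot.

Set Implicit Arguments.
Unset Strict Implicit.
Unset Printing Implicit Defensive.

(* The theorem is witnessed by the explicit square [witness]; all its
   properties are finite, so they are checked by evaluation once every
   quantifier over ['I_n] and every big sum is replaced by a computation over
   an explicit enumeration of ['I_n]. *)

(* [ord_enum] itself does not evaluate: [insub] decides membership through the
   opaque [idP]; [insub_eq] is its transparent variant. *)
Definition ord_seq n : seq 'I_n := pmap (@insub_eq _ _ _) (iota 0 n).

Lemma ord_seqE n : ord_seq n = ord_enum n.
Proof. by rewrite /ord_seq /ord_enum (eq_pmap (@insub_eqE _ _ _)). Qed.

Lemma all_ordP n (p : pred 'I_n) : reflect (forall i, p i) (all p (ord_seq n)).
Proof.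
rewrite ord_seqE.
by apply: (iffP allP) => [p_all i | p_all i _]; [apply: p_all; rewrite mem_ord_enum|].
Qed.

Lemma all_ord2P n (p : 'I_n -> 'I_n -> bool) :
  reflect (forall i j, p i j) (all (fun i => all (p i) (ord_seq n)) (ord_seq n)).
Proof.
apply: (iffP (all_ordP _)) => [p_all i | p_all i]; last exact/all_ordP.
exact/all_ordP/p_all.
Qed.

Lemma all_iotaP n (p : pred nat) : reflect (forall c, c < n -> p c) (all p (iota 0 n)).
Proof.
by apply: (iffP allP) => p_all c; [move=> lt_cn|rewrite mem_iota => /p_all];
  [apply: p_all; rewrite mem_iota|].
Qed.

Definition ord_sum n (P : pred 'I_n) (F : 'I_n -> nat) : nat :=
  sumn (map F (filter P (ord_seq n))).

Lemma big_ord_sum n (P : pred 'I_n) (F : 'I_n -> nat) :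
  \sum_(i < n | P i) F i = ord_sum P F.
Proof.
by rewrite /ord_sum sumnE big_map big_filter [index_enum _]unlock Finite.enum.unlock ord_seqE.
Qed.

Section Checks.

Variables (n : nat) (M : array n) (S1 : nat).

Definition magic_check : bool :=
  [&& all (fun i => ord_sum predT (M i) == S1) (ord_seq n),
      all (fun j => ord_sum predT (M^~ j) == S1) (ord_seq n),
      ord_sum predT (fun i => M i i) == S1
    & ord_sum predT (fun i => M i (rev_ord i)) == S1].

Definition pandiagonal_check : bool :=
  [&& magic_check,
      all (fun c => ord_sum predT (fun i =>
             ord_sum (fun j => (j + n - i) %% n == c %% n) (M i)) == S1) (iota 0 n)
    & all (fun c => ord_sum predT (fun i =>
             ord_sum (fun j => (i + j) %% n == c %% n) (M i)) == S1) (iota 0 n)].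

Lemma magic_checkP : magic_check -> is_magic M S1.
Proof.
case/and4P=> /all_ordP rows /all_ordP cols diag adiag.
rewrite /is_magic /row_sum /col_sum /diag_sum /antidiag_sum.
by do !split=> *; rewrite big_ord_sum; apply/eqP.
Qed.

Lemma pandiagonal_checkP : pandiagonal_check -> is_pandiagonal_magic M S1.
Proof.
case/and3P=> /magic_checkP magic /all_iotaP diags /all_iotaP adiags.
split=> //; split=> c lt_cn; rewrite /broken_diag_sum /broken_antidiag_sum;
  under eq_bigr do rewrite big_ord_sum; rewrite big_ord_sum; apply/eqP.
- exact: diags.
- exact: adiags.
Qed.

End Checks.

Lemma injective2_checkP n (T : eqType) (A : 'I_n -> 'I_n -> T) :
  all (fun i => all (fun j =>
    all (fun i' => all (fun j' => (A i j == A i' j') ==> (i == i') && (j == j'))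
      (ord_seq n)) (ord_seq n)) (ord_seq n)) (ord_seq n) ->
  forall i j i' j', A i j = A i' j' -> i = i' /\ j = j'.
Proof.
move=> /all_ord2P A_inj i j i' j' eq_A.
by move: (A_inj i j) => /all_ord2P/(_ i' j'); rewrite eq_A eqxx => /andP[/eqP-> /eqP->].
Qed.

Definition witness_table : seq (seq digstr) :=
  [:: [:: [:: 1; 1; 0; 2]; [:: 1; 2; 2; 1]; [:: 2; 1; 2; 2]; [:: 1; 0; 0; 0]; [:: 0; 1; 1; 0]];
      [:: [:: 1; 0; 2; 2]; [:: 0; 1; 0; 0]; [:: 1; 1; 1; 0]; [:: 1; 2; 0; 2]; [:: 2; 1; 2; 1]];
      [:: [:: 1; 2; 1; 0]; [:: 2; 1; 0; 2]; [:: 1; 0; 2; 1]; [:: 0; 1; 2; 2]; [:: 1; 1; 0; 0]];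
      [:: [:: 0; 1; 2; 1]; [:: 1; 1; 2; 2]; [:: 1; 2; 0; 0]; [:: 2; 1; 1; 0]; [:: 1; 0; 0; 2]];
      [:: [:: 2; 1; 0; 0]; [:: 1; 0; 1; 0]; [:: 0; 1; 0; 2]; [:: 1; 1; 2; 1]; [:: 1; 2; 2; 2]]].

Definition witness (i j : 'I_5) : digstr := nth [::] (nth [::] witness_table i) j.

Theorem mainTheorem3 :
  exists A : 'I_5 -> 'I_5 -> digstr,
    (forall i j, ternary_string 4 (A i j)) /\
    (forall i j i' j', A i j = A i' j' -> i = i' /\ j = j') /\
    is_pandiagonal_magic (val_array A) 5555 /\
    is_magic (val_array (rot_array A)) 5555.
Proof.
exists witness; split; [|split; [|split]].
- by apply/(all_ord2P (fun i j => ternary_string 4 (witness i j))); vm_compute.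
- by apply: injective2_checkP; vm_compute.
- by apply: pandiagonal_checkP; vm_compute.
- by apply: magic_checkP; vm_compute.
Qed.
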